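(* Let $d$ be odd and $N = p^4$ for some prime $p \neq 2$. In the coefficient-choosing game of degree $d$ over $\mathbb{Z}/N\mathbb{Z}$, Wanda has a winning strategy (whether she moves first or second).
   Context: The coefficient-choosing game of degree $d$ over $R = \mathbb{Z}/N\mathbb{Z}$: Nora and Wanda alternately choose coefficients of $f(x) = a_d x^d + \cdots + a_0$; on each move the current player picks a not-yet-chosen coefficient and assigns it a value in $R$, subject to $a_d \neq 0$, $a_0 \neq 0$. After all $d+1$ coefficients are chosen, Wanda wins if $f$ has a root in $R$, and Nora wins otherwise. *)

From HB Require Import structures.
From mathcomp Require Import all_boot all_order all_algebra.
Set Implicit Arguments. Unset Strict Implicit. Unset Printing Implicit Defensive.
Import GRing.Theory.
Local Open Scope ring_scope.

(* A position is a partial assignment of the d+1 coefficients a_0..a_d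
   (index i : 'I_d.+1 is the coefficient of x^i); None = not yet chosen. *)
Section Game.
Variables (N d : nat).

Definition position := {ffun 'I_d.+1 -> option 'Z_N}.

Definition empty_pos : position := [ffun _ => None].

Definition all_chosen (s : position) : bool := [forall i, s i != None].

Definition legal (i : 'I_d.+1) (v : 'Z_N) : bool :=
  ((i == ord_max) ==> (v != 0)) && ((i == ord0) ==> (v != 0)).

Definition update (s : position) (i : 'I_d.+1) (v : 'Z_N) : position :=
  [ffun j => if j == i then Some v else s j].

Definition pos_poly (s : position) : {poly 'Z_N} :=
  \poly_(i < d.+1) odflt 0 (s (inord i)).

Definition wanda_wins_final (s : position) : Prop :=
  exists x : 'Z_N, root (pos_poly s) x.

(* WandaWins s b : Wanda has a winning strategy from position s,
   where b = true means it is Wanda's turn to move, b = false Nora's.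
   (Least fixed point: the game is finite.) *)
Inductive WandaWins : position -> bool -> Prop :=
| WW_end s b : all_chosen s -> wanda_wins_final s -> WandaWins s b
| WW_wanda s : ~~ all_chosen s ->
    (exists i v, s i = None /\ legal i v /\ WandaWins (update s i v) false) ->
    WandaWins s true
| WW_nora s : ~~ all_chosen s ->
    (forall i v, s i = None -> legal i v -> WandaWins (update s i v) true) ->
    WandaWins s false.

End Game.

(* Moving second, Wanda pairs a_i with a_(d-i) -- for odd d a fixed-point-free
   pairing that matches a_0 with a_d -- and answers every choice a by -a in the
   paired slot; then 2 f(1) = 0, and 2 is invertible mod p^4.
   Moving first (d >= 3), Wanda sets a_0 = p^2.  Every x in pZ has x^4 = 0, so
   there f(x) = p^2 + a_1 x + a_2 x^2 + a_3 x^3.  If Nora sets a_1 = v, Wanda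
   picks a_2 according to whether v is a unit, p times a unit, or divisible by
   p^2, and in each case f has a root in pZ whatever a_3 is; if Nora plays
   elsewhere, Wanda sets a_1 = 1 and -p^2 is a root.  For d = 1 Wanda sets
   a_1 = 1. *)

From mathcomp Require Import all_boot all_order all_algebra.
From mathcomp Require Import ring zify.
Set Implicit Arguments. Unset Strict Implicit. Unset Printing Implicit Defensive.
Import GRing.Theory.
Local Open Scope ring_scope.

Lemma eq_inord n k l : (k <= n)%N -> (l <= n)%N ->
  (inord k == inord l :> 'I_n.+1) = (k == l).
Proof. by move=> kn ln; rewrite -(inj_eq val_inj) /= !inordK. Qed.

Section Strategies.
Variables (N d : nat).
Implicit Types (s t : position N d) (i j : 'I_d.+1).

Lemma update_eq s i v : update s i v i = Some v.
Proof. by rewrite ffunE eqxx. Qed.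

Lemma update_neq s i j v : j != i -> update s i v j = s j.
Proof. by move=> ji; rewrite ffunE (negbTE ji). Qed.

Lemma not_all_chosen s i : s i = None -> ~~ all_chosen s.
Proof. by move=> si; apply/forallPn; exists i; rewrite si. Qed.

Definition unchosen s := [set i | s i == None].

Lemma card_unchosen_update s i v :
  s i = None -> (#|unchosen (update s i v)| < #|unchosen s|)%N.
Proof.
move=> si; apply/proper_card/properP; split.
  by apply/subsetP => j; rewrite !inE ffunE; case: (j == i).
by exists i; rewrite inE ?si ?update_eq.
Qed.

Lemma WandaWins_of_invariant (I : position N d -> bool -> Prop) :
  (forall s b, I s b -> all_chosen s -> wanda_wins_final s) ->
  (forall s, I s true -> ~~ all_chosen s ->
     exists i v, [/\ s i = None, legal i v & I (update s i v) false]) ->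
  (forall s i v, I s false -> s i = None -> legal i v -> I (update s i v) true) ->
  forall s b, I s b -> WandaWins s b.
Proof.
move=> Iend Iwanda Inora s b.
have [n] : exists n, (#|unchosen s| < n)%N by exists #|unchosen s|.+1.
elim: n s b => [//|n IH] s b lt_sn Isb.
have [ac|nac] := boolP (all_chosen s); first exact: WW_end (Iend _ _ Isb ac).
have IH_move i v : s i = None -> I (update s i v) (~~ b) -> WandaWins (update s i v) (~~ b).
  move=> si; apply: IH; exact: leq_trans (card_unchosen_update v si) lt_sn.
case: b Isb IH_move => Isb IH_move.
  have [i [v [si lv Isv]]] := Iwanda s Isb nac.
  by apply: WW_wanda => //; exists i, v; split => //; split => //; apply: IH_move.
by apply: WW_nora => // i v si lv; apply: IH_move => //; apply: Inora.
Qed.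

Definition extends s t := forall i a, s i = Some a -> t i = Some a.

Definition won s := forall t, extends s t -> all_chosen t -> wanda_wins_final t.

Lemma extends_update s i v : s i = None -> extends s (update s i v).
Proof. by move=> si j a sj; rewrite update_neq //; apply/eqP => ji; rewrite -ji sj in si. Qed.

Lemma legal_neq0 i (v : 'Z_N) : v != 0 -> legal i v.
Proof. by move=> v0; rewrite /legal v0 !implybT. Qed.

Lemma legal_inner i (v : 'Z_N) : i != ord0 -> i != ord_max -> legal i v.
Proof. by move=> /negbTE i0 /negbTE imax; rewrite /legal i0 imax. Qed.

Lemma WandaWins_won s b : won s -> WandaWins s b.
Proof.
move=> ws; apply: (@WandaWins_of_invariant (fun t _ => extends s t)) => //.
- by move=> t _ st; apply: ws.
- move=> t st /forallPn[i /negPn/eqP ti]; exists i, 1; split; rewrite ?legal_neq0 ?oner_neq0 //.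
  by move=> j a /st; apply: extends_update.
- by move=> t i v st ti _ j a /st; apply: extends_update.
Qed.

Lemma WandaWins_move s i v : s i = None -> legal i v ->
  WandaWins (update s i v) false -> WandaWins s true.
Proof. by move=> si lv w; apply: WW_wanda (not_all_chosen si) _; exists i, v. Qed.

Lemma coef_pos_poly s k a : (k <= d)%N -> s (inord k) = Some a -> (pos_poly s)`_k = a.
Proof. by move=> kd sk; rewrite coef_poly ltnS kd sk. Qed.

Lemma horner_pos_poly s x :
  (pos_poly s).[x] = \sum_(i < d.+1) odflt 0 (s i) * x ^+ i.
Proof. by rewrite horner_poly; apply: eq_bigr => i _; rewrite inord_val. Qed.

End Strategies.

Section Pairing.
Variables (N d : nat).
Hypotheses (d_odd : odd d) (two_unit : (2%:R : 'Z_N) \is a GRing.unit).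
Implicit Types (s : position N d) (i : 'I_d.+1).

Definition balanced s := forall i, s (rev_ord i) = omap -%R (s i).

Lemma rev_ord_neq i : rev_ord i != i.
Proof.
apply/eqP => /(congr1 val) /= ri.
have d_double : d = (val i).*2 by have := ltn_ord i; lia.
by move: d_odd; rewrite d_double odd_double.
Qed.

Lemma rev_ord_eq_max i : (rev_ord i == ord_max) = (i == ord0).
Proof. by rewrite -(inj_eq val_inj) -[RHS](inj_eq val_inj) /=; lia. Qed.

Lemma rev_ord_eq0 i : (rev_ord i == ord0) = (i == ord_max).
Proof. by rewrite -(inj_eq val_inj) -[RHS](inj_eq val_inj) /=; have := ltn_ord i; lia. Qed.

Lemma legal_rev i (v : 'Z_N) : legal i v -> legal (rev_ord i) (- v).
Proof. by rewrite /legal rev_ord_eq_max rev_ord_eq0 oppr_eq0 andbC. Qed.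

Lemma balanced_update s i v : balanced s -> s i = None ->
  balanced (update (update s i v) (rev_ord i) (- v)).
Proof.
move=> bs si j.
have i_rev : i != rev_ord i by rewrite eq_sym rev_ord_neq.
have [->|ji] := eqVneq j i; first by rewrite update_eq update_neq // update_eq.
have [->|jri] := eqVneq j (rev_ord i).
  by rewrite rev_ordK [LHS]update_neq // !update_eq /= opprK.
have rj_i : rev_ord j != i by apply: contra_neq jri => <-; rewrite rev_ordK.
have rj_ri : rev_ord j != rev_ord i by rewrite (inj_eq rev_ord_inj).
by rewrite !update_neq // bs.
Qed.

Lemma balanced_root1 s : balanced s -> root (pos_poly s) 1.
Proof.
move=> bs; rewrite /root horner_pos_poly.
set S := \sum_(i < _) _.
have S_opp : S = - S.
  rewrite [LHS](reindex_inj rev_ord_inj) -sumrN; apply: eq_bigr => i _.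
  by rewrite bs !expr1n !mulr1; case: (s i); rewrite /= ?oppr0.
by apply/eqP/(mulrI two_unit); rewrite mulr0 mulr_natl mulr2n {1}S_opp addNr.
Qed.

Lemma WandaWins_second : WandaWins (empty_pos N d) false.
Proof.
pose I s (b : bool) := if b then exists i v, [/\ s i = None, legal i v & balanced (update s i v)]
                       else balanced s.
apply: (@WandaWins_of_invariant _ _ I); last by move=> i; rewrite !ffunE.
- move=> s [[i [v [si _ _]]]|bs] ac; first by rewrite (negbTE (not_all_chosen si)) in ac.
  by exists 1; apply: balanced_root1.
- by move=> s [i [v [si lv bs]]] _; exists i, v.
- move=> s i v bs si lv; exists (rev_ord i), (- v); split.
  + by rewrite update_neq ?rev_ord_neq // bs si.
  + exact: legal_rev.
  + exact: balanced_update.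
Qed.

End Pairing.

Lemma horner_nilpotent (R : nzSemiRingType) (q : {poly R}) (x : R) n :
  x ^+ n = 0 -> q.[x] = \sum_(i < n) q`_i * x ^+ i.
Proof.
move=> xn; rewrite (horner_coef_wide _ (leq_addl n (size q))) big_split_ord /=.
by rewrite [X in _ + X]big1 ?addr0 // => i _; rewrite exprD xn mul0r mulr0.
Qed.

Lemma horner_size2 (R : nzSemiRingType) (q : {poly R}) (x : R) :
  (size q <= 2)%N -> q.[x] = q`_0 + q`_1 * x.
Proof.
by move=> sq; rewrite (horner_coef_wide _ sq) !big_ord_recl big_ord0 /= expr0 mulr1 expr1 addr0.
Qed.

Lemma horner_cubic (R : nzSemiRingType) (q : {poly R}) (x : R) : x ^+ 4 = 0 ->
  q.[x] = q`_0 + q`_1 * x + q`_2 * x ^+ 2 + q`_3 * x ^+ 3.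
Proof.
move=> x4; rewrite (horner_nilpotent _ x4).
by rewrite !big_ord_recl big_ord0 /= expr0 mulr1 expr1 addr0 !addrA.
Qed.

Section NilpotentRoots.
Variables (R : comUnitRingType) (P : R).
Hypothesis P4 : P ^+ 4 = 0.
Variable q : {poly R}.
Hypothesis q0 : q`_0 = P ^+ 2.

Let mulP_exp4 y : (P * y) ^+ 4 = 0.
Proof. by rewrite exprMn P4 mul0r. Qed.

Lemma root_coef1_unit : q`_1 \is a GRing.unit -> root q (P * (- P / q`_1)).
Proof.
move=> q1_unit; apply/eqP; rewrite (horner_cubic _ (mulP_exp4 _)) q0.
set u := (q`_1)^-1; set c1 := q`_1; set c2 := q`_2; set c3 := q`_3.
have -> : P ^+ 2 + c1 * (P * (- P * u)) + c2 * (P * (- P * u)) ^+ 2 + c3 * (P * (- P * u)) ^+ 3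
    = P ^+ 2 * (1 - c1 * u) + P ^+ 4 * (c2 * u ^+ 2 - c3 * P ^+ 2 * u ^+ 3) by ring.
by rewrite /u mulrV // subrr P4 !mul0r mulr0 addr0.
Qed.

Lemma root_coef1_P_unit c : c \is a GRing.unit -> q`_1 = P * c -> q`_2 = 0 ->
  root q (P * (- c^-1 + P * q`_3 * c^-1 ^+ 4)).
Proof.
(* One Newton step from the approximate root [- P / c]. *)
move=> c_unit q1 q2; apply/eqP; rewrite (horner_cubic _ (mulP_exp4 _)) q0 q1 q2.
set u := c^-1; set c3 := q`_3; set y := - u + P * c3 * u ^+ 4.
have -> : P ^+ 2 + P * c * (P * y) + 0 * (P * y) ^+ 2 + c3 * (P * y) ^+ 3 =
   (1 - c * u) * (P ^+ 2 * (1 - P * c3 * u ^+ 3)) +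
   P ^+ 4 * (c3 * (3%:R * c3 * u ^+ 6 - 3%:R * P * c3 ^+ 2 * u ^+ 9 + P ^+ 2 * c3 ^+ 3 * u ^+ 12)).
  by rewrite /y; ring.
by rewrite /u mulrV // subrr P4 !mul0r addr0.
Qed.

Lemma root_coef1_P2 e : (2%:R : R) \is a GRing.unit -> q`_1 = P ^+ 2 * e -> q`_2 = -1 ->
  root q (P * (1 + P * ((e + q`_3) / 2%:R))).
Proof.
(* [x = P (1 + P s)] leaves [P ^+ 3 (e + q`_3 - 2 s)] modulo [P ^+ 4]. *)
move=> two_unit q1 q2; apply/eqP; rewrite (horner_cubic _ (mulP_exp4 _)) q0 q1 q2.
set h := (2%:R : R)^-1; set c3 := q`_3; set s := (e + c3) * h.
have -> : P ^+ 2 + P ^+ 2 * e * (P * (1 + P * s)) + -1 * (P * (1 + P * s)) ^+ 2 +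
    c3 * (P * (1 + P * s)) ^+ 3 =
   P ^+ 3 * (e + c3) * (1 - 2%:R * h) +
   P ^+ 4 * (e * s - s ^+ 2 + c3 * (3%:R * s + 3%:R * P * s ^+ 2 + P ^+ 2 * s ^+ 3)).
  by rewrite /s; ring.
by rewrite /h mulrV // subrr mulr0 P4 mul0r addr0.
Qed.

End NilpotentRoots.

Section PrimeFourthPower.
Variable p : nat.
Hypotheses (p_prime : prime p) (p_neq2 : p != 2).
Local Notation Z := 'Z_(p ^ 4).
Let P : Z := p%:R.

Lemma p4_gt1 : (1 < p ^ 4)%N.
Proof. by rewrite -[1%N](exp1n 4) ltn_exp2r ?prime_gt1. Qed.

Lemma p_exp4_eq0 : P ^+ 4 = 0.
Proof. by rewrite /P -natrX pchar_Zp // p4_gt1. Qed.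

Lemma p_exp2_neq0 : P ^+ 2 != 0.
Proof.
rewrite /P -natrX; apply/eqP => /(congr1 val) /=.
rewrite val_Zp_nat ?p4_gt1 // modn_small ?ltn_exp2l ?prime_gt1 //.
by move/eqP; rewrite expn_eq0 andbT; apply/negP; rewrite -lt0n prime_gt0.
Qed.

Lemma unit_Zp4_nat k : ~~ (p %| k)%N -> (k%:R : Z) \is a GRing.unit.
Proof. by move=> pk; rewrite unitZpE ?p4_gt1 // coprimeXl // prime_coprime. Qed.

Lemma two_unit : (2%:R : Z) \is a GRing.unit.
Proof. by apply: unit_Zp4_nat; rewrite dvdn_prime2 // eq_sym. Qed.

Lemma Zp4_trichotomy (v : Z) : [\/ v \is a GRing.unit,
  exists2 c, c \is a GRing.unit & v = P * c | exists e, v = P ^+ 2 * e].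
Proof.
have [k ->] : exists k, v = k%:R by exists v; rewrite natr_Zp.
have [pk|/unit_Zp4_nat] := boolP (p %| k)%N; last by constructor 1.
have [ppk|/unit_Zp4_nat c_unit] := boolP (p %| k %/ p)%N.
  constructor 3; exists (k %/ p %/ p)%:R.
  by rewrite -{1}(divnK pk) -{1}(divnK ppk) !natrM /P; ring.
constructor 2; exists (k %/ p)%:R => //.
by rewrite -{1}(divnK pk) natrM mulrC.
Qed.

Lemma reply_to_a1 (v : Z) : exists w, forall q : {poly Z},
  q`_0 = P ^+ 2 -> q`_1 = v -> q`_2 = w -> exists x, root q x.
Proof.
case: (Zp4_trichotomy v) => [v_unit | [c c_unit vE] | [e vE]].
- by exists 0 => q q0 q1 _; eexists; apply: (root_coef1_unit p_exp4_eq0 q0); rewrite q1.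
- exists 0 => q q0 q1 q2; eexists.
  exact: (root_coef1_P_unit p_exp4_eq0 q0 c_unit (etrans q1 vE) q2).
- exists (-1) => q q0 q1 q2; eexists.
  exact: (root_coef1_P2 p_exp4_eq0 q0 two_unit (etrans q1 vE) q2).
Qed.

Variable d : nat.
Hypothesis d_ge3 : (3 <= d)%N.

Lemma WandaWins_first : WandaWins (empty_pos (p ^ 4) d) true.
Proof.
have d1 : (1 <= d)%N by apply: leq_trans d_ge3.
have d2 : (2 <= d)%N by apply: leq_trans d_ge3.
apply: (@WandaWins_move _ _ _ (inord 0) (P ^+ 2)); first by rewrite ffunE.
  exact: legal_neq0 p_exp2_neq0.
set s1 := update _ _ _.
have s1_1 : s1 (inord 1) = None by rewrite update_neq ?eq_inord // ffunE.
apply: WW_nora (not_all_chosen s1_1) _ => i v s1i lv.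
set s2 := update s1 i v.
have s2_0 : s2 (inord 0) = Some (P ^+ 2) by apply: (extends_update v s1i); rewrite update_eq.
have [i1|i_neq1] := eqVneq i (inord 1).
  have [w reply] := reply_to_a1 v.
  have s2_1 : s2 (inord 1) = Some v by rewrite /s2 i1 update_eq.
  have s2_2 : s2 (inord 2) = None by rewrite !update_neq ?i1 ?eq_inord // ffunE.
  have inner2 : legal (inord 2 : 'I_d.+1) w.
    by apply: legal_inner; rewrite -(inj_eq val_inj) /= inordK //; lia.
  apply: (WandaWins_move s2_2 inner2); apply: WandaWins_won => t ext _.
  apply: reply; apply: coef_pos_poly => //; apply: ext.
  - by rewrite update_neq ?eq_inord.
  - by rewrite update_neq ?eq_inord.
  - exact: update_eq.
have s2_1 : s2 (inord 1) = None by rewrite update_neq 1?eq_sym.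
apply: (WandaWins_move s2_1 (legal_neq0 _ (oner_neq0 _))); apply: WandaWins_won => t ext _.
have t1 : (pos_poly t)`_1 = 1 by apply: coef_pos_poly => //; apply: ext; rewrite update_eq.
have t0 : (pos_poly t)`_0 = P ^+ 2.
  by apply: coef_pos_poly => //; apply: ext; rewrite update_neq ?eq_inord.
by eexists; apply: (root_coef1_unit p_exp4_eq0 t0); rewrite t1 unitr1.
Qed.

End PrimeFourthPower.

Lemma WandaWins_first_linear N : WandaWins (empty_pos N 1) true.
Proof.
apply: (@WandaWins_move _ _ _ (inord 1) 1); first by rewrite ffunE.
  exact: legal_neq0 (oner_neq0 _).
apply: WandaWins_won => t ext _; exists (- (pos_poly t)`_0).
have t1 : (pos_poly t)`_1 = 1 by apply: coef_pos_poly => //; apply: ext; rewrite update_eq.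
by rewrite /root horner_size2 ?size_poly // t1 mul1r addrN.
Qed.

Theorem lemma8 (p d : nat) :
  prime p -> p != 2 -> odd d ->
  WandaWins (empty_pos (p ^ 4) d) true /\ WandaWins (empty_pos (p ^ 4) d) false.
Proof.
move=> p_prime p_neq2 d_odd; split; last exact: WandaWins_second d_odd (two_unit p_prime p_neq2).
have [->|d_ge3] : d = 1%N \/ (3 <= d)%N by case: d d_odd => [|[|[|]]] //; auto.
  exact: WandaWins_first_linear.
exact: WandaWins_first.
Qed.
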